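(* Let $\phi(p_1,\dots,p_n)$ be a consistent formula of $\mathbf{PT}$ whose propositional variables are among $p_1,\dots,p_n$. The following are equivalent: (i) $\phi$ is flat; (ii) $\phi\equiv\Theta_X$ for some nonempty team $X$ on $\{p_1,\dots,p_n\}$; (iii) $\phi\equiv\neg\neg\phi$; (iv) $\models\phi\otimes\neg\phi$.
   Context: A valuation is a function $v$ from the set Prop of propositional variables to $\{0,1\}$; a team is a set of valuations. Formulas of $\mathbf{PT}$: $\phi::=p\mid\bot\mid\top\mid\,=\!(\phi_1,\dots,\phi_n,\phi)\mid\neg\phi\mid\phi\wedge\phi\mid\phi\otimes\phi\mid\phi\vee\phi\mid\phi\to\phi$. Satisfaction on a team $X$: $X\models p$ iff $v(p)=1$ for all $v\in X$; $X\models\bot$ iff $X=\emptyset$; $X\models\top$ always; $\wedge$ conjunction; $X\models\phi\otimes\psi$ iff $X=Y\cup Z$ with $Y\models\phi$, $Z\models\psi$; $X\models\phi\vee\psi$ iff $X\models\phi$ or $X\models\psi$; $X\models\phi\to\psi$ iff every $Y\subseteq X$ with $Y\models\phi$ satisfies $\psi$; $X\models\neg\phi$ iff $\{v\}\not\models\phi$ for all $v\in X$; $X\models\,=\!(\phi_1,\dots,\phi_n,\psi)$ iff $X\models\bigwedge_i(\phi_i\vee(\phi_i\to\bot))\to(\psi\vee(\psi\to\bot))$. $\models\phi$: all teams satisfy $\phi$; $\phi\equiv\psi$: same teams satisfy both; $\phi$ is consistent if some nonempty team satisfies $\phi$. $\phi$ is flat if for all teams $X$: $X\models\phi$ iff $\{v\}\models\phi$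 for all $v\in X$. A team on $V=\{p_1,\dots,p_n\}$ is a set of functions $V\to\{0,1\}$; a valuation $w$ satisfies formulas in variables from $V$ according to its restriction to $V$. For a nonempty team $X$ on $V$, $\Theta_X:=\neg\neg\bigvee_{v\in X}(p_1^{v(p_1)}\wedge\dots\wedge p_n^{v(p_n)})$, where $p^1:=p$, $p^0:=\neg p$. *)

From mathcomp Require Import all_boot.
Set Implicit Arguments. Unset Strict Implicit. Unset Printing Implicit Defensive.

(* Propositional variables are indexed by nat; p_(i+1) of the paper is [Var i]. *)
Definition valuation := nat -> bool.
(* A team is an arbitrary (possibly infinite) set of valuations. *)
Definition team := valuation -> Prop.

Definition subteam (Y X : team) : Prop := forall v, Y v -> X v.
Definition singleton (v : valuation) : team := fun w => w = v.
Definition empty_team (X : team) : Prop := forall v, ~ X v.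

Inductive form : Type :=
| Var of nat
| Bot
| Top
| Dep of list form & form
| Neg of form
| And of form & form
| Tensor of form & form
| Or of form & form              (* intuitionistic disjunction *)
| Imp of form & form.

(* Team semantics. The dependence atom is interpreted literally as
   /\_i (phi_i \/ (phi_i -> Bot)) -> (psi \/ (psi -> Bot)),
   with the empty conjunction being Top. *)
Fixpoint sat (f : form) (X : team) {struct f} : Prop :=
  match f with
  | Var p => forall v, X v -> v p = true
  | Bot => empty_team X
  | Top => True
  | Dep l g =>
      forall Y, subteam Y X ->
        (fix allsat (l : list form) : Prop :=
           match l with
           | nil => True
           | a :: l' =>
               (sat a Y \/ (forall Z, subteam Z Y -> sat a Z -> empty_team Z))
               /\ allsat l'
           end) l ->
        (sat g Y \/ (forall Z, subteam Z Y -> sat g Z -> empty_team Z))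
  | Neg g => forall v, X v -> ~ sat g (singleton v)
  | And g h => sat g X /\ sat h X
  | Tensor g h => exists Y Z : team,
      (forall v, X v <-> Y v \/ Z v) /\ sat g Y /\ sat h Z
  | Or g h => sat g X \/ sat h X
  | Imp g h => forall Y, subteam Y X -> sat g Y -> sat h Y
  end.

Definition valid (f : form) : Prop := forall X : team, sat f X.
Definition team_equiv (f g : form) : Prop := forall X : team, sat f X <-> sat g X.
Definition consistent (f : form) : Prop :=
  exists X : team, (exists v, X v) /\ sat f X.
Definition flat (f : form) : Prop :=
  forall X : team, sat f X <-> (forall v, X v -> sat f (singleton v)).

Fixpoint vars_lt (n : nat) (f : form) {struct f} : Prop :=
  match f with
  | Var p => (p < n)%N
  | Bot | Top => True
  | Dep l g =>
      (fix allv (l : list form) : Prop :=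
         match l with nil => True | a :: l' => vars_lt n a /\ allv l' end) l
      /\ vars_lt n g
  | Neg g => vars_lt n g
  | And g h | Tensor g h | Or g h | Imp g h => vars_lt n g /\ vars_lt n h
  end.

(* Big connectives over a list, with a default for the empty list
   (only used on nonempty lists for disjunction). *)
Fixpoint bigAnd (l : list form) : form :=
  match l with nil => Top | [:: a] => a | a :: l' => And a (bigAnd l') end.
Fixpoint bigOr (l : list form) : form :=
  match l with nil => Bot | [:: a] => a | a :: l' => Or a (bigOr l') end.

Definition lit (i : nat) (b : bool) : form := if b then Var i else Neg (Var i).

(* Teams on V = {p_1,...,p_n} are sets of functions 'I_n -> bool. *)
Definition Theta (n : nat) (X : {set {ffun 'I_n -> bool}}) : form :=
  Neg (Neg (bigOr [seq bigAnd [seq lit (nat_of_ord i) (v i) | i : 'I_n <- enum 'I_n]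
                | v : {ffun 'I_n -> bool} <- enum X])).

From mathcomp Require Import all_boot.
From Stdlib Require Import Classical ClassicalEpsilon FunctionalExtensionality PropExtensionality.

Set Implicit Arguments. Unset Strict Implicit. Unset Printing Implicit Defensive.

(* Satisfaction in PT is closed under subteams, and a formula in the variables
   p_1, ..., p_n sees a valuation only through its restriction to them.
   A team satisfies ~~phi iff each of its singletons satisfies phi, so flatness
   of phi is exactly phi == ~~phi.  A flat phi is then determined by the set X
   of restricted valuations whose singletons satisfy it, and Theta_X describes
   precisely the teams all of whose members lie in X.  Finally, a flat phi
   splits every team into its phi-part and its ~phi-part, so phi (x) ~phi is
   valid; conversely, if phi (x) ~phi is valid then in any team whose
   singletons satisfy phi the ~phi-part is empty, and downward closure gives
   phi on the whole team. *)

Definition all_form (P : form -> Prop) : list form -> Prop :=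
  fix all_form l := match l with nil => True | a :: l' => P a /\ all_form l' end.

Lemma all_form_mp (P Q : form -> Prop) l :
  all_form (fun a => P a -> Q a) l -> all_form P l -> all_form Q l.
Proof. by elim: l => //= a l IH [PQa PQl] [Pa Pl]; split; [exact: PQa | exact: IH]. Qed.

Definition form_nested_ind (P : form -> Prop)
  (HVar : forall p, P (Var p)) (HBot : P Bot) (HTop : P Top)
  (HDep : forall l g, all_form P l -> P g -> P (Dep l g))
  (HNeg : forall g, P g -> P (Neg g))
  (HAnd : forall g h, P g -> P h -> P (And g h))
  (HTensor : forall g h, P g -> P h -> P (Tensor g h))
  (HOr : forall g h, P g -> P h -> P (Or g h))
  (HImp : forall g h, P g -> P h -> P (Imp g h)) : forall f, P f :=
  fix F (f : form) : P f :=
  match f with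
  | Var p => HVar p
  | Bot => HBot
  | Top => HTop
  | Dep l g => HDep l g ((fix Fl (l : list form) : all_form P l :=
                          match l return all_form P l with
                          | nil => I
                          | a :: l' => conj (F a) (Fl l')
                          end) l) (F g)
  | Neg g => HNeg g (F g)
  | And g h => HAnd g h (F g) (F h)
  | Tensor g h => HTensor g h (F g) (F h)
  | Or g h => HOr g h (F g) (F h)
  | Imp g h => HImp g h (F g) (F h)
  end.

(* The paper's [phi \/ (phi -> Bot)], out of which dependence atoms are built. *)
Definition decided (a : form) (Y : team) : Prop :=
  sat a Y \/ (forall Z, subteam Z Y -> sat a Z -> empty_team Z).

Lemma sat_subteam f X Y : subteam Y X -> sat f X -> sat f Y.
Proof.
elim: f X Y => [p|||l g _|g _|g IHg h IHh|g IHg h IHh|g IHg h IHh|g _ h _] X Y YX /=.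
- by move=> H v /YX /H.
- by move=> H v /YX /H.
- by [].
- by move=> H Z ZY; apply: H => u /ZY /YX.
- by move=> H v /YX /H.
- by case=> Hg Hh; split; [exact: IHg YX Hg | exact: IHh YX Hh].
- case=> [A [B [XAB [HA HB]]]].
  exists (fun v => Y v /\ A v), (fun v => Y v /\ B v); split; last split.
  + move=> v; split; last by case=> [][].
    by move=> Yv; case: ((XAB v).1 (YX v Yv)) => ?; [left | right].
  + by apply: IHg HA => v [].
  + by apply: IHh HB => v [].
- by case=> H; [left; exact: IHg YX H | right; exact: IHh YX H].
- by move=> H Z ZY; apply: H => u /ZY /YX.
Qed.

Definition subsingleton (v : valuation) (b : Prop) : team := fun u => u = v /\ b.

Lemma team_ext (X Y : team) : (forall u, X u <-> Y u) -> X = Y.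
Proof.
move=> XY; apply: functional_extensionality => u.
exact: propositional_extensionality.
Qed.

Lemma singletonE v : singleton v = subsingleton v True.
Proof. by apply: team_ext => u; split => [-> | []]. Qed.

Lemma subteam_subsingleton Y v b : subteam Y (subsingleton v b) -> Y = subsingleton v (Y v).
Proof.
move=> Yv; apply: team_ext => u; split => [Yu | [-> //]].
by case: (Yv u Yu) => uv _; subst u.
Qed.

Lemma subteam_subsingleton_move Y v w b :
  subteam Y (subsingleton w b) -> subteam (subsingleton v (Y w)) (subsingleton v b).
Proof. by move=> Yw u [-> /Yw []]. Qed.

Section Locality.

Variable n : nat.

Definition agree (v w : valuation) : Prop := forall i, (i < n)%N -> v i = w i.

Lemma agree_sym v w : agree v w -> agree w v.
Proof. by move=> vw i /vw. Qed.

(* Stated for subteams of singletons rather than singletons, because Dep and Imp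
   inspect subteams, and the subteams of a subsingleton are again subsingletons. *)
Definition local (a : form) : Prop :=
  forall b v w, agree v w -> sat a (subsingleton v b) -> sat a (subsingleton w b).

Lemma decided_local a b v w : local a -> agree v w ->
  decided a (subsingleton v b) -> decided a (subsingleton w b).
Proof.
move=> loc_a vw [H | H]; first by left; exact: loc_a vw H.
right => Z Zw aZ; rewrite (subteam_subsingleton Zw) in aZ.
have Zv := subteam_subsingleton_move (v := v) Zw.
have emptyv := H _ Zv (loc_a _ _ _ (agree_sym vw) aZ).
by move=> u Zu; case: (Zw u Zu) => uw _; subst u; apply: (emptyv v).
Qed.

Lemma all_decided_local l b v w : all_form local l -> agree v w ->
  all_form (decided^~ (subsingleton v b)) l -> all_form (decided^~ (subsingleton w b)) l.
Proof.
move=> loc_l vw; elim: l loc_l => //= a l IH [loc_a loc_l] [Da Dl].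
by split; [exact: decided_local vw Da | exact: IH].
Qed.

Lemma vars_lt_local f : vars_lt n f -> local f.
Proof.
elim/form_nested_ind: f.
- by move=> p /= p_lt b v w vw H u [-> b_]; rewrite -vw //; apply: H.
- by move=> _ b v w _ H u [_ b_]; apply: (H v).
- by [].
- move=> l g IHl IHg [vars_l vars_g] b v w vw H Y Yw.
  have loc_l := all_form_mp IHl vars_l.
  rewrite (subteam_subsingleton Yw) => Dl.
  apply: (decided_local (IHg vars_g) vw).
  apply: H (subteam_subsingleton_move (v := v) Yw) _.
  exact: all_decided_local loc_l (agree_sym vw) Dl.
- move=> g IHg vars_g b v w vw H u [-> b_].
  rewrite singletonE => gw; apply: (H v (conj erefl b_)).
  by rewrite singletonE; apply: IHg (agree_sym vw) gw.
- move=> g h IHg IHh [vars_g vars_h] b v w vw [Hg Hh].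
  by split; [exact: IHg vars_g _ _ _ vw Hg | exact: IHh vars_h _ _ _ vw Hh].
- move=> g h IHg IHh [vars_g vars_h] b v w vw [Y [Z [vYZ [gY hZ]]]].
  have Yv : subteam Y (subsingleton v b) by move=> u Yu; apply/vYZ; left.
  have Zv : subteam Z (subsingleton v b) by move=> u Zu; apply/vYZ; right.
  rewrite (subteam_subsingleton Yv) in gY; rewrite (subteam_subsingleton Zv) in hZ.
  exists (subsingleton w (Y v)), (subsingleton w (Z v)); split; last split.
  + move=> u; split => [[-> b_] | [[-> Yv'] | [-> Zv']]].
    * by case: ((vYZ v).1 (conj erefl b_)) => ?; [left | right].
    * by split => //; case: (Yv v Yv').
    * by split => //; case: (Zv v Zv').
  + exact: IHg vars_g _ _ _ vw gY.
  + exact: IHh vars_h _ _ _ vw hZ.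
- move=> g h IHg IHh [vars_g vars_h] b v w vw [H | H].
  + by left; exact: IHg vars_g _ _ _ vw H.
  + by right; exact: IHh vars_h _ _ _ vw H.
- move=> g h IHg IHh [vars_g vars_h] b v w vw H Y Yw.
  rewrite (subteam_subsingleton Yw) => gY.
  apply: (IHh vars_h _ _ _ vw); apply: H (subteam_subsingleton_move (v := v) Yw) _.
  exact: IHg vars_g _ _ _ (agree_sym vw) gY.
Qed.

Lemma sat_singleton_agree f v w :
  vars_lt n f -> agree v w -> sat f (singleton v) -> sat f (singleton w).
Proof. by rewrite !singletonE => /vars_lt_local; apply. Qed.

End Locality.

Lemma sat_neg_neg f Y : sat (Neg (Neg f)) Y <-> forall u, Y u -> sat f (singleton u).
Proof.
split => /= [H u Yu | H v Yv nf]; last exact: nf v erefl (H v Yv).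
by apply: NNPP => nf; apply: (H u Yu) => _ ->.
Qed.

Lemma sat_bigAnd (T : eqType) (F : T -> form) (s : seq T) X :
  sat (bigAnd [seq F i | i <- s]) X <-> forall i, i \in s -> sat (F i) X.
Proof.
elim: s => [|a [|b s] IH]; first by split => // _ i; rewrite in_nil.
  by split => [H i /[!inE] /eqP -> // | H]; apply: H; rewrite inE.
split => [[Fa /IH Fs] i | H] /=; first by rewrite inE => /orP[/eqP -> | /Fs].
split; first by apply: H; rewrite inE eqxx.
by apply/IH => i si; apply: H; rewrite inE si orbT.
Qed.

Lemma sat_bigOr (T : eqType) (F : T -> form) (s : seq T) X : (exists u, X u) ->
  (sat (bigOr [seq F i | i <- s]) X <-> exists2 i, i \in s & sat (F i) X).
Proof.
move=> [u Xu]; elim: s => [|a [|b s] IH].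
- by split => [/(_ u Xu) [] | [i]]; rewrite in_nil.
- split => [H | [i /[!inE] /eqP -> //]].
  by exists a; rewrite ?inE.
- split => [[Fa | /IH [i si Fi]] | [i /[!inE] /orP[/eqP -> | si] Fi]] /=.
  + by exists a; rewrite ?inE ?eqxx.
  + by exists i; rewrite // inE si orbT.
  + by left.
  + by right; apply/IH; exists i.
Qed.

Lemma sat_lit i b u : sat (lit i b) (singleton u) <-> u i = b.
Proof.
case: b => /=; first by split => [/(_ u erefl) | ui w ->].
split => [H | ui v -> /(_ u erefl)]; last by rewrite ui.
by apply/negbTE/negP => ui; apply: (H u erefl) => _ ->.
Qed.

Definition restrict (n : nat) (v : valuation) : {ffun 'I_n -> bool} :=
  [ffun i => v (val i)].

Definition extend (n : nat) (f : {ffun 'I_n -> bool}) : valuation :=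
  fun i => if insub i is Some j then f j else false.

Lemma agree_extend_restrict n v : agree n (extend (restrict n v)) v.
Proof. by move=> i i_lt; rewrite /extend insubT /= ffunE. Qed.

Lemma sat_Theta n (X : {set {ffun 'I_n -> bool}}) Y :
  sat (Theta X) Y <-> forall u, Y u -> restrict n u \in X.
Proof.
have body (u : valuation) :
    sat (bigOr [seq bigAnd [seq lit (nat_of_ord i) (v i) | i : 'I_n <- enum 'I_n]
               | v : {ffun 'I_n -> bool} <- enum X]) (singleton u) <-> restrict n u \in X.
  rewrite (sat_bigOr (fun v : {ffun 'I_n -> bool} =>
             bigAnd [seq lit (nat_of_ord i) (v i) | i <- enum 'I_n])); last by exists u.
  split => [[f fX /sat_bigAnd uf] | uX].
    suff -> : restrict n u = f by rewrite -mem_enum.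
    by apply/ffunP => i; rewrite ffunE; apply/sat_lit/uf; rewrite mem_enum.
  exists (restrict n u); first by rewrite mem_enum.
  by apply/(sat_bigAnd (fun i : 'I_n => lit i (restrict n u i))) => i _; apply/sat_lit; rewrite ffunE.
rewrite /Theta sat_neg_neg.
by split => H u /H /body.
Qed.

Lemma flat_iff_neg_neg phi : flat phi <-> team_equiv phi (Neg (Neg phi)).
Proof.
by split => H X; have := H X; rewrite sat_neg_neg.
Qed.

Lemma flat_team_equiv phi psi : team_equiv phi psi -> flat psi -> flat phi.
Proof.
move=> phi_psi psi_flat X; rewrite phi_psi psi_flat.
by split => H v /H /phi_psi.
Qed.

Lemma flat_Theta n (X : {set {ffun 'I_n -> bool}}) : flat (Theta X).
Proof.
move=> Y; rewrite sat_Theta.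
split => H v Yv; first by apply/sat_Theta => _ ->; apply: H.
exact: (sat_Theta X (singleton v)).1 (H v Yv) v erefl.
Qed.

Lemma flat_valid_tensor_neg phi : flat phi -> valid (Tensor phi (Neg phi)).
Proof.
move=> phi_flat X.
exists (fun v => X v /\ sat phi (singleton v)), (fun v => X v /\ ~ sat phi (singleton v)).
split; last split; last by move=> v [].
- move=> v; split => [Xv | [[] | []] //].
  by case: (classic (sat phi (singleton v))) => ?; [left | right].
- by apply/phi_flat => v [].
Qed.

Lemma valid_tensor_neg_flat phi : valid (Tensor phi (Neg phi)) -> flat phi.
Proof.
move=> valid_phi Y; split => [phiY v Yv | H].
  by apply: sat_subteam phiY => _ ->.
have [A [B [YAB [phiA negB]]]] := valid_phi Y.
apply: sat_subteam phiA => u Yu.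
by case: ((YAB u).1 Yu) => // Bu; case: (negB u Bu (H u Yu)).
Qed.

Definition decide (P : Prop) : bool := if excluded_middle_informative P then true else false.

Lemma decideP P : reflect P (decide P).
Proof. by rewrite /decide; case: excluded_middle_informative => ?; constructor. Qed.

Lemma flat_equiv_Theta n phi : vars_lt n phi -> consistent phi -> flat phi ->
  exists X : {set {ffun 'I_n -> bool}}, X != set0 /\ team_equiv phi (Theta X).
Proof.
move=> vars_phi [Y0 [[v0 Y0v0] phiY0]] phi_flat.
pose X := [set f : {ffun 'I_n -> bool} | decide (sat phi (singleton (extend f)))].
have inX u : restrict n u \in X <-> sat phi (singleton u).
  rewrite inE; split => [/decideP | phiu]; last apply/decideP.
    exact: sat_singleton_agree vars_phi (agree_extend_restrict (n := n) u).
  exact: sat_singleton_agree vars_phi (agree_sym (agree_extend_restrict (n := n) u)) phiu.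
exists X; split.
  by apply/set0Pn; exists (restrict n v0); apply/inX/(sat_subteam _ phiY0) => _ ->.
move=> Y; rewrite phi_flat sat_Theta.
by split => H u /H /inX.
Qed.

Theorem lemma4p1 (n : nat) (phi : form) :
  vars_lt n phi -> consistent phi ->
  [<-> flat phi;
       exists X : {set {ffun 'I_n -> bool}}, X != set0 /\ team_equiv phi (Theta X);
       team_equiv phi (Neg (Neg phi));
       valid (Tensor phi (Neg phi))].
Proof.
move=> vars_phi phi_consistent; tfae.
- exact: flat_equiv_Theta.
- case=> X [_ phi_Theta]; apply/flat_iff_neg_neg.
  exact: flat_team_equiv phi_Theta (flat_Theta X).
- by move/flat_iff_neg_neg; apply: flat_valid_tensor_neg.
- exact: valid_tensor_neg_flat.
Qed.
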